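(* For every prime number $p$ there is an equivariant definable set $X$ in $\mathbf{ZFA}(\mathcal{G}_{\mathcal{F}_p})$ such that the vector space $\mathcal{F}_p^X$ does not have a basis (in $\mathbf{ZFA}(\mathcal{G}_{\mathcal{F}_p})$).
   Context: Let $\mathcal{F}_p$ be the field with $p$ elements. Let $V$ and $V^*$ be two disjoint $\aleph_0$-dimensional vector spaces over $\mathcal{F}_p$ and $\Phi:V\times V^*\to\mathcal{F}_p$ a bilinear map satisfying the Space Extension Axiom: for every finite linearly independent sequence $v_1,\dots,v_k$ in $V$ (resp. $V^*$), scalars $r_1,\dots,r_k\in\mathcal{F}_p$, and finite set $W\subseteq V^*$ (resp. $W\subseteq V$), there is $w\notin W$ with $\Phi(v_i,w)=r_i$ (resp. $\Phi(w,v_i)=r_i$) for all $i$. The polar geometry is the structure $\mathcal{G}_{\mathcal{F}_p}=\langle V\cup V^*,B,\Phi,+,(-)r\ (r\in\mathcal{F}_p)\rangle$, where $+$ and scalar multiplication are interpreted separately on $V$ and $V^*$ and the unary predicate $B$ holds exactly on $V$. $\mathbf{ZFA}(\mathcal{G}_{\mathcal{F}_p})$ is the permutation model with atoms $V\cup V^*$ consisting of hereditarily finitely supported sets (supported by finite $A_0$ = fixed by all automorphisms of the structure fixing $A_0$ pointwise). A set is equivariant if fixed by all automorphisms, and an equivariant set is definable if it has finitely many orbits. $\mathcal{F}_p^X$ is the vector space of finitely supported functions $X\to\mathcal{F}_p$, and a basis must be a finitely supported set. *)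

From HB Require Import structures.
From Stdlib Require List.
From mathcomp Require Import all_boot all_algebra.
Set Implicit Arguments. Unset Strict Implicit. Unset Printing Implicit Defensive.
Import GRing.Theory.
Local Open Scope ring_scope.

Section Polar.
Variable F : fieldType.
Variables (V Vs : lmodType F).

Definition aleph0_basis (W : lmodType F) (e : nat -> W) : Prop :=
  (forall (n : nat) (c : 'I_n -> F),
      \sum_(i < n) c i *: e i = 0 -> forall i, c i = 0) /\
  (forall w : W, exists (n : nat) (c : 'I_n -> F), w = \sum_(i < n) c i *: e i).

Definition aleph0_dim (W : lmodType F) : Prop := exists e : nat -> W, aleph0_basis e.

Definition bilinear_form (Phi : V -> Vs -> F) : Prop :=
  (forall a v1 v2 w, Phi (a *: v1 + v2) w = a * Phi v1 w + Phi v2 w) /\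
  (forall a v w1 w2, Phi v (a *: w1 + w2) = a * Phi v w1 + Phi v w2).

Definition lin_indep_fin (W : lmodType F) (k : nat) (v : 'I_k -> W) : Prop :=
  forall c : 'I_k -> F, \sum_(i < k) c i *: v i = 0 -> forall i, c i = 0.

Definition space_extension_axiom (Phi : V -> Vs -> F) : Prop :=
  (forall (k : nat) (v : 'I_k -> V) (r : 'I_k -> F) (W : seq Vs),
      lin_indep_fin v -> exists w : Vs, w \notin W /\ forall i, Phi (v i) w = r i) /\
  (forall (k : nat) (v : 'I_k -> Vs) (r : 'I_k -> F) (W : seq V),
      lin_indep_fin v -> exists w : V, w \notin W /\ forall i, Phi w (v i) = r i).

(* Automorphisms of <V u V*, B, Phi, +, (-)r>: since B (= V) is preserved,
   an automorphism is a pair of bijections of V and of V*, preserving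
   + and scalar multiplication on each sort, and preserving Phi. *)
Definition is_aut (Phi : V -> Vs -> F) (s : V -> V) (t : Vs -> Vs) : Prop :=
  [/\ bijective s, bijective t,
      (forall x y, s (x + y) = s x + s y) /\ (forall (a : F) x, s (a *: x) = a *: s x),
      (forall x y, t (x + y) = t x + t y) /\ (forall (a : F) x, t (a *: x) = a *: t x)
    & forall v w, Phi (s v) (t w) = Phi v w].

Definition atom := (V + Vs)%type.

Definition amap (s : V -> V) (t : Vs -> Vs) (a : atom) : atom :=
  match a with inl v => inl (s v) | inr w => inr (t w) end.

End Polar.

(* The cumulative hierarchy over a type of atoms (Aczel-style ZFA).    *)

Inductive zfa (A : Type) : Type :=
| Atm : A -> zfa A
| Cls : forall Ix : Type, (Ix -> zfa A) -> zfa A.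
Arguments Atm {A}.
Arguments Cls {A Ix}.

Fixpoint zeq (A : Type) (x y : zfa A) {struct x} : Prop :=
  match x, y with
  | Atm a, Atm b => a = b
  | @Cls _ Ix f, @Cls _ Jx g =>
      (forall i, exists j, zeq (f i) (g j)) /\ (forall j, exists i, zeq (f i) (g j))
  | _, _ => False
  end.

Definition zin (A : Type) (y x : zfa A) : Prop :=
  match x with
  | Atm _ => False
  | @Cls _ Ix f => exists i, zeq y (f i)
  end.

Definition is_set (A : Type) (x : zfa A) : Prop :=
  match x with Atm _ => False | @Cls _ _ _ => True end.

Fixpoint zact (A : Type) (pi : A -> A) (x : zfa A) : zfa A :=
  match x with
  | Atm a => Atm (pi a)
  | @Cls _ Ix f => Cls (fun i => zact pi (f i))
  end.

Section Model.
Variable F : fieldType.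
Variables (V Vs : lmodType F).
Variable Phi : V -> Vs -> F.

Notation atom := (atom V Vs).
Notation Z := (zfa atom).

Definition fixes (s : V -> V) (t : Vs -> Vs) (A0 : list atom) : Prop :=
  forall a, List.In a A0 -> amap s t a = a.

Definition supports (A0 : list atom) (x : Z) : Prop :=
  forall s t, is_aut Phi s t -> fixes s t A0 -> zeq (zact (amap s t) x) x.

Definition fin_supp (x : Z) : Prop := exists A0 : list atom, supports A0 x.

(* hereditarily finitely supported = element of ZFA(G_F) *)
Fixpoint in_model (x : Z) : Prop :=
  match x with
  | Atm _ => True
  | @Cls _ Ix f => fin_supp (Cls f) /\ forall i, in_model (f i)
  end.

Definition equivariant (x : Z) : Prop := supports [::] x.

Definition definable (X : Z) : Prop :=
  equivariant X /\
  exists (n : nat) (ys : 'I_n -> Z),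
    (forall k, zin (ys k) X) /\
    forall y, zin y X ->
      exists k s t, is_aut Phi s t /\ zeq y (zact (amap s t) (ys k)).

(* Elements of F^X (functions X -> F in the model), represented by maps
   f : Z -> F that are well defined on X (respect extensional equality
   on elements of X) and finitely supported; f and g denote the same
   element of F^X iff they agree on X. *)
Definition agree_on (X : Z) (f g : Z -> F) : Prop :=
  forall y, zin y X -> f y = g y.

Definition well_defined_on (X : Z) (f : Z -> F) : Prop :=
  forall y y', zin y X -> zeq y y' -> f y = f y'.

Definition fun_supports (X : Z) (A0 : list atom) (f : Z -> F) : Prop :=
  forall s t, is_aut Phi s t -> fixes s t A0 ->
    forall y, zin y X -> f (zact (amap s t) y) = f y.

Definition in_FX (X : Z) (f : Z -> F) : Prop :=
  well_defined_on X f /\ exists A0, fun_supports X A0 f.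

(* A set B of elements of F^X (given by a predicate, closed under
   agreement on X) that belongs to the model and is a basis. *)
Definition is_basis_in_model (X : Z) (B : (Z -> F) -> Prop) : Prop :=
  (forall f, B f -> in_FX X f) /\
  (forall f g, B f -> in_FX X g -> agree_on X f g -> B g) /\
  (exists A0 : list atom, forall s t, is_aut Phi s t -> fixes s t A0 ->
     (forall f, B f -> exists g, B g /\ forall y, zin y X -> g (zact (amap s t) y) = f y) /\
     (forall g, B g -> exists f, B f /\ forall y, zin y X -> g (zact (amap s t) y) = f y)) /\
  (forall (n : nat) (fs : 'I_n -> Z -> F) (c : 'I_n -> F),
     (forall i, B (fs i)) ->
     (forall i j, i != j -> ~ agree_on X (fs i) (fs j)) ->
     (forall y, zin y X -> \sum_(i < n) c i * fs i y = 0) ->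
     forall i, c i = 0) /\
  (forall g, in_FX X g ->
     exists (n : nat) (fs : 'I_n -> Z -> F) (c : 'I_n -> F),
       (forall i, B (fs i)) /\
       forall y, zin y X -> g y = \sum_(i < n) c i * fs i y).

Definition FX_has_basis (X : Z) : Prop :=
  exists B : (Z -> F) -> Prop, is_basis_in_model X B.

End Model.

From mathcomp Require Import all_boot all_algebra boolp.
Set Implicit Arguments. Unset Strict Implicit. Unset Printing Implicit Defensive.
Import GRing.Theory.
Local Open Scope ring_scope.

(* Take X to be the set of atoms of V. It is equivariant, and it has finitely
   many orbits because the transvections v |-> v + Phi(v, x) u, Phi(u, x) = 0,
   map a nonzero vector e to any vector independent of e.
   Suppose that F^X has a basis B supported by a finite set A0. Every w in V*
   gives the functional f_w = Phi(-, w) in F^X, with a unique expansion in B.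
   Let b in B be supported by a finite E containing A0, and call z in V*
   generic for E if it is orthogonal to the V-atoms of E and outside the span
   of its V*-atoms. For z generic and d generic for E and z, transvections
   fixing E send d and z + d to z, so f_z, f_d and f_(z+d) = f_z + f_d have
   the same coefficient at b, which must therefore be 0.
   Fix w outside the span of the V*-atoms of A0, let E contain A0 and support
   the basis elements occurring in f_w, and let w' be generic for E and
   independent of w modulo A0. Then f_w and f_w' expand over disjoint parts
   of B, so f_(w+w') involves as many basis elements as f_w and f_w'
   together. But a transvection fixing A0 sends w + w' to w, so f_(w+w')
   involves exactly as many as f_w. Hence f_w' = 0, which is absurd. *)

Section Independence.
Variable F : fieldType.

Definition extend (T : Type) k (v : 'I_k -> T) (x : T) : 'I_k.+1 -> T :=
  fun i => if unlift ord_max i is Some j then v j else x.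

Lemma extend_lift T k (v : 'I_k -> T) x j : extend v x (lift ord_max j) = v j.
Proof. by rewrite /extend liftK. Qed.

Lemma extend_max T k (v : 'I_k -> T) x : extend v x ord_max = x.
Proof. by rewrite /extend unlift_none. Qed.

Lemma sum_extend (W : lmodType F) k (c : 'I_k.+1 -> F) (v : 'I_k -> W) x :
  \sum_(i < k.+1) c i *: extend v x i =
  \sum_(i < k) c (lift ord_max i) *: v i + c ord_max *: x.
Proof.
rewrite big_ord_recr /= extend_max; congr (_ + _); apply: eq_bigr => i _.
have -> : widen_ord (leqnSn k) i = lift ord_max i.
  by apply: val_inj; rewrite /= /bump leqNgt ltn_ord.
by rewrite extend_lift.
Qed.

Lemma lin_indep_fin0 (W : lmodType F) (v : 'I_0 -> W) : lin_indep_fin v.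
Proof. by move=> c _ []. Qed.

Lemma lin_indep_extend (W : lmodType F) k (v : 'I_k -> W) x :
  lin_indep_fin v -> (forall c : 'I_k -> F, x <> \sum_(i < k) c i *: v i) ->
  lin_indep_fin (extend v x).
Proof.
move=> v_indep x_notin c; rewrite sum_extend => sum0.
have cmax0 : c ord_max = 0.
  apply/eqP/negP => /negP cmax_neq0.
  apply: (x_notin (fun i => - c (lift ord_max i) / c ord_max)).
  apply: (@scalerI _ _ (c ord_max)) => //.
  have -> : c ord_max *: x = - \sum_(i < k) c (lift ord_max i) *: v i.
    by apply/eqP; rewrite -addr_eq0 addrC sum0.
  rewrite scaler_sumr -sumrN; apply: eq_bigr => i _.
  by rewrite scalerA mulrC divfK // scaleNr.
move: sum0; rewrite cmax0 scale0r addr0 => /v_indep c0 i.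
by case: (unliftP ord_max i) => [j ->|->].
Qed.

End Independence.

Section FiniteSpan.
Variables (F : finFieldType) (W : lmodType F).

Definition span_seq k (v : 'I_k -> W) : seq W :=
  [seq \sum_(i < k) f i *: v i | f : {ffun 'I_k -> F} <- enum {ffun 'I_k -> F}].

Lemma mem_span_seq k (v : 'I_k -> W) (c : 'I_k -> F) :
  \sum_(i < k) c i *: v i \in span_seq v.
Proof.
apply/mapP; exists [ffun i => c i]; first by rewrite mem_enum.
by apply: eq_bigr => i _; rewrite ffunE.
Qed.

Lemma lin_indep_extend_span k (v : 'I_k -> W) x :
  lin_indep_fin v -> x \notin span_seq v -> lin_indep_fin (extend v x).
Proof.
move=> v_indep x_notin; apply: lin_indep_extend => // c x_eq.
by rewrite x_eq mem_span_seq in x_notin.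
Qed.

Lemma sum_widen (e : nat -> W) n m (c : 'I_n -> F) : (n <= m)%N ->
  exists c' : 'I_m -> F, \sum_(i < n) c i *: e i = \sum_(i < m) c' i *: e i.
Proof.
move=> le_nm; pose cn (j : nat) := if insub j is Some i then c i else 0.
exists (fun i => cn i).
rewrite (eq_bigr (fun i : 'I_n => cn i *: e i)); last by move=> i _; rewrite /cn valK.
rewrite (big_ord_widen m (fun j => cn j *: e j) le_nm) big_mkcond /=.
by apply: eq_bigr => i _; case: ifP => // i_ge; rewrite /cn insubF ?scale0r.
Qed.

Lemma aleph0_basis_cover (e : nat -> W) : aleph0_basis e ->
  forall L : seq W, exists m, forall v, v \in L ->
    exists c : 'I_m -> F, v = \sum_(i < m) c i *: e i.
Proof.
case=> _ e_span; elim=> [|a L [m cover_L]]; first by exists 0%N.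
have [n [c ->]] := e_span a.
exists (maxn n m) => v; rewrite inE => /predU1P[->|/cover_L [c' ->]].
  by have [c'' ->] := sum_widen e c (leq_maxl n m); exists c''.
by have [c'' ->] := sum_widen e c' (leq_maxr n m); exists c''.
Qed.

End FiniteSpan.

Section Transvections.
Variable F : fieldType.
Variables (V Vs : lmodType F) (Phi : V -> Vs -> F).
Hypothesis Phi_bilinear : bilinear_form Phi.

Lemma form0l w : Phi 0 w = 0.
Proof.
by have := Phi_bilinear.1 (-1) 0 0 w; rewrite scaler0 addr0 mulN1r addNr => ->.
Qed.

Lemma formDl v1 v2 w : Phi (v1 + v2) w = Phi v1 w + Phi v2 w.
Proof. by have := Phi_bilinear.1 1 v1 v2 w; rewrite scale1r mul1r. Qed.

Lemma formZl a v w : Phi (a *: v) w = a * Phi v w.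
Proof. by have := Phi_bilinear.1 a v 0 w; rewrite addr0 form0l addr0. Qed.

Lemma formBl v1 v2 w : Phi (v1 - v2) w = Phi v1 w - Phi v2 w.
Proof. by rewrite formDl -scaleN1r formZl mulN1r. Qed.

Lemma form0r v : Phi v 0 = 0.
Proof.
by have := Phi_bilinear.2 (-1) v 0 0; rewrite scaler0 addr0 mulN1r addNr => ->.
Qed.

Lemma formDr v w1 w2 : Phi v (w1 + w2) = Phi v w1 + Phi v w2.
Proof. by have := Phi_bilinear.2 1 v w1 w2; rewrite scale1r mul1r. Qed.

Lemma formZr a v w : Phi v (a *: w) = a * Phi v w.
Proof. by have := Phi_bilinear.2 a v w 0; rewrite addr0 form0r addr0. Qed.

Lemma formNr v w : Phi v (- w) = - Phi v w.
Proof. by rewrite -scaleN1r formZr mulN1r. Qed.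

Lemma formBr v w1 w2 : Phi v (w1 - w2) = Phi v w1 - Phi v w2.
Proof. by rewrite formDr formNr. Qed.

Lemma form_suml k (c : 'I_k -> F) (e : 'I_k -> V) w :
  Phi (\sum_(i < k) c i *: e i) w = \sum_(i < k) c i * Phi (e i) w.
Proof. by elim/big_rec2: _ => [|i y1 y2 _ <-]; rewrite ?form0l ?formDl ?formZl. Qed.

Lemma form_sumr k (c : 'I_k -> F) (e : 'I_k -> Vs) v :
  Phi v (\sum_(i < k) c i *: e i) = \sum_(i < k) c i * Phi v (e i).
Proof. by elim/big_rec2: _ => [|i y1 y2 _ <-]; rewrite ?form0r ?formDr ?formZr. Qed.

Definition transvectionV (x : Vs) (u : V) (v : V) : V := v + Phi v x *: u.
Definition transvectionVs (x : Vs) (u : V) (w : Vs) : Vs := w - Phi u w *: x.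

Lemma aut_bij s t : is_aut Phi s t -> bijective s.
Proof. by case. Qed.

Lemma transvection_aut x u :
  Phi u x = 0 -> is_aut Phi (transvectionV x u) (transvectionVs x u).
Proof.
rewrite /transvectionV /transvectionVs => ux0; split.
- exists (transvectionV (- x) u) => v; rewrite /transvectionV formDl formZl !formNr ux0.
    by rewrite oppr0 mulr0 addr0 scaleNr addrK.
  by rewrite mulr0 addr0 scaleNr subrK.
- exists (fun w => w + Phi u w *: x) => w;
    by rewrite /= ?formBr ?formDr formZr ux0 mulr0 ?addr0 ?subr0 ?addrK ?subrK.
- split=> [v1 v2|a v]; first by rewrite formDl scalerDl addrACA.
  by rewrite formZl scalerDr scalerA.
- split=> [w1 w2|a w]; first by rewrite formDr scalerDl opprD addrACA.
  by rewrite formZr scalerBr scalerA.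
- move=> v w; rewrite formDl !formBr !formZl !formZr ux0 !mulr0 subr0.
  by rewrite [Phi u w * _]mulrC subrK.
Qed.

Definition orthV (E : list (atom V Vs)) (w : Vs) : Prop :=
  forall v, List.In (inl v) E -> Phi v w = 0.

Definition orthVs (E : list (atom V Vs)) (u : V) : Prop :=
  forall w, List.In (inr w) E -> Phi u w = 0.

Lemma transvection_fixes E x u :
  orthV E x -> orthVs E u -> fixes (transvectionV x u) (transvectionVs x u) E.
Proof.
move=> Ex Eu [v|w] /= inE; congr (_ _).
  by rewrite /transvectionV Ex // scale0r addr0.
by rewrite /transvectionVs Eu // scale0r subr0.
Qed.

End Transvections.

Section Combinations.
Variables (F : fieldType) (D : Type).
Implicit Types (r s : seq (F * (D -> F))) (b : D -> F) (sigma : D -> D).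

Definition comb r : D -> F := fun x => \sum_(p <- r) p.1 * p.2 x.

Definition coef r b : F := \sum_(p <- r | p.2 == b) p.1.

Definition reduced r : bool := uniq (map snd r) && all (fun p => p.1 != 0) r.

Definition oppc r := [seq (- p.1, p.2) | p <- r].

Definition precomp (sigma : D -> D) r := [seq (p.1, p.2 \o sigma) | p <- r].

Lemma comb_cat r s x : comb (r ++ s) x = comb r x + comb s x.
Proof. exact: big_cat. Qed.

Lemma coef_cat r s b : coef (r ++ s) b = coef r b + coef s b.
Proof. exact: big_cat. Qed.

Lemma coef_cons p r b : coef (p :: r) b = (if p.2 == b then p.1 else 0) + coef r b.
Proof. by rewrite /coef big_cons; case: ifP; rewrite ?add0r. Qed.

Lemma comb_oppc r x : comb (oppc r) x = - comb r x.
Proof. by rewrite /comb big_map -sumrN; apply: eq_bigr => p _; rewrite mulNr. Qed.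

Lemma coef_oppc r b : coef (oppc r) b = - coef r b.
Proof. by rewrite /coef big_map -sumrN. Qed.

Lemma comb_precomp sigma r x : comb (precomp sigma r) x = comb r (sigma x).
Proof. by rewrite /comb big_map. Qed.

Lemma coef_notin r b : b \notin map snd r -> coef r b = 0.
Proof.
move=> b_notin; apply: big1_seq => p /andP[/eqP pb pr].
by move: b_notin; rewrite -pb map_f.
Qed.

Lemma coef_mem r p : uniq (map snd r) -> p \in r -> coef r p.2 = p.1.
Proof.
elim: r => // q r IH /= /andP[q_notin r_uniq]; rewrite inE coef_cons.
case/predU1P=> [->|pr]; first by rewrite eqxx coef_notin ?addr0.
rewrite IH // ifN ?add0r //; apply: contraNneq q_notin => ->; exact: map_f.
Qed.

Lemma reduced_coef r b : reduced r -> (coef r b != 0) = (b \in map snd r).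
Proof.
case/andP=> r_uniq /allP r_neq0; apply/idP/idP; last first.
  by case/mapP=> p pr ->; rewrite coef_mem // r_neq0.
by apply: contraTT => /coef_notin ->; rewrite eqxx.
Qed.

Lemma reduce r : exists s, [/\ reduced s, {subset map snd s <= map snd r},
  comb s =1 comb r & coef s =1 coef r].
Proof.
pose sr := [seq b <- undup (map snd r) | coef r b != 0].
pose s := [seq (coef r b, b) | b <- sr].
have snd_s : map snd s = sr by rewrite -map_comp map_id.
have s_reduced : reduced s.
  rewrite /reduced snd_s filter_uniq ?undup_uniq //=.
  by apply/allP => _ /mapP[b + ->]; rewrite mem_filter => /andP[].
exists s; split=> // [b|x|b].
- by rewrite snd_s mem_filter mem_undup => /andP[].
- rewrite /comb big_map big_filter /=.
  rewrite big_rmcond => [|b /negPn/eqP ->]; last by rewrite mul0r.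
  have coef_comb b : coef r b * b x = \sum_(p <- r) (if p.2 == b then p.1 * p.2 x else 0).
    by rewrite /coef big_distrl big_mkcond; apply: eq_bigr => p _; case: eqP => // ->.
  rewrite (eq_bigr _ (fun b _ => coef_comb b)) exchange_big /=.
  apply: eq_big_seq => p pr; rewrite -big_mkcond /= (eq_bigl (pred1 p.2)) => [|b]; last first.
    by rewrite /= eq_sym.
  by rewrite -big_filter filter_pred1_uniq ?undup_uniq ?mem_undup ?map_f // big_seq1.
- case: (boolP (b \in sr)) => [b_sr|b_notin].
    exact: (coef_mem (andP s_reduced).1 (map_f (fun b => (coef r b, b)) b_sr)).
  rewrite coef_notin ?snd_s //; move: b_notin; rewrite mem_filter mem_undup negb_and negbK.
  by case/orP => [/eqP|/coef_notin] ->.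
Qed.

Lemma reduced_cat r s :
  reduced r -> reduced s -> {in map snd r, forall b, b \notin map snd s} ->
  reduced (r ++ s).
Proof.
case/andP=> r_uniq r_neq0 /andP[s_uniq s_neq0] rs_disj.
rewrite /reduced map_cat cat_uniq r_uniq s_uniq all_cat r_neq0 s_neq0 !andbT /=.
by apply/hasPn => b b_s; apply: contraL b_s => /rs_disj.
Qed.

Lemma precomp_inj sigma : bijective sigma -> injective (fun h : D -> F => h \o sigma).
Proof.
case=> g _ gK h1 h2 h12; apply/funext => y; rewrite -[y]gK.
exact: (congr1 (fun h => h (g y)) h12).
Qed.

Lemma reduced_precomp sigma r : bijective sigma -> reduced r -> reduced (precomp sigma r).
Proof.
move=> sigma_bij /andP[r_uniq r_neq0]; rewrite /reduced /precomp all_map r_neq0 andbT.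
have -> : map snd [seq (p.1, p.2 \o sigma) | p <- r] = map (fun h => h \o sigma) (map snd r).
  by rewrite -!map_comp.
by rewrite map_inj_uniq //; exact: precomp_inj.
Qed.

Lemma coef_precomp sigma r b :
  bijective sigma -> b \o sigma = b -> coef (precomp sigma r) b = coef r b.
Proof.
move=> sigma_bij b_inv; rewrite /coef big_map; apply: eq_bigl => p /=.
by rewrite -{1}b_inv (inj_eq (precomp_inj sigma_bij)).
Qed.

Section FreeSets.
Variable B : (D -> F) -> Prop.

Definition free_set : Prop :=
  forall r, {in r, forall p, B p.2} -> uniq (map snd r) -> comb r =1 (fun=> 0) ->
  {in r, forall p, p.1 = 0}.

Hypothesis B_free : free_set.

Lemma coef_comb0 r :
  {in r, forall p, B p.2} -> comb r =1 (fun=> 0) -> coef r =1 (fun=> 0).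
Proof.
move=> rB r0 b; have [s [/andP[s_uniq _] s_sub s_comb <-]] := reduce r.
have sB : {in s, forall p, B p.2}.
  by move=> p /(map_f snd)/s_sub/mapP[q qr ->]; exact: rB.
have s0 := B_free sB s_uniq (fun x => etrans (s_comb x) (r0 x)).
by apply: big1_seq => p /andP[_ /s0].
Qed.

Lemma coef_unique r s : {in r, forall p, B p.2} -> {in s, forall p, B p.2} ->
  comb r =1 comb s -> coef r =1 coef s.
Proof.
move=> rB sB rs b; apply/eqP; rewrite -subr_eq0 -coef_oppc -coef_cat.
apply/eqP/coef_comb0 => [p|x].
  by rewrite mem_cat => /orP[/rB //|/mapP[q /sB qB ->]].
by rewrite comb_cat comb_oppc rs subrr.
Qed.

Lemma reduced_size_unique r s : reduced r -> reduced s ->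
  {in r, forall p, B p.2} -> {in s, forall p, B p.2} ->
  comb r =1 comb s -> size r = size s.
Proof.
move=> r_red s_red rB sB rs; rewrite -(size_map snd r) -(size_map snd s).
apply/perm_size/uniq_perm; rewrite ?(andP r_red).1 ?(andP s_red).1 // => b.
by rewrite -!reduced_coef // (coef_unique rB sB rs).
Qed.

Lemma exists_reduced r : {in r, forall p, B p.2} ->
  exists s, [/\ reduced s, {in s, forall p, B p.2} & comb s =1 comb r].
Proof.
move=> rB; have [s [s_red s_sub s_comb _]] := reduce r.
exists s; split=> // p /(map_f snd)/s_sub/mapP[q qr ->]; exact: rB.
Qed.

End FreeSets.

End Combinations.

Lemma In_mem (T : eqType) (x : T) (s : seq T) : List.In x s -> x \in s.
Proof. by elim: s => //= y s IH [->|/IH xs]; rewrite inE ?eqxx ?xs ?orbT. Qed.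


Section NoInvariantBasis.
Variables (F : finFieldType) (V Vs : lmodType F) (Phi : V -> Vs -> F).
Hypotheses (Phi_bilinear : bilinear_form Phi) (Phi_sea : space_extension_axiom Phi).
Variables (eV : nat -> V) (eS : nat -> Vs).
Hypotheses (eV_basis : aleph0_basis eV) (eS_basis : aleph0_basis eS).
Implicit Types (E : list (atom V Vs)) (r : seq (F * (V -> F))).

Definition atomsV E : seq V := pmap (fun a => if a is inl v then Some v else None) E.
Definition atomsVs E : seq Vs := pmap (fun a => if a is inr w then Some w else None) E.

Lemma exists_orthogonal E (L : seq Vs) : exists w, w \notin L /\ orthV Phi E w.
Proof.
have [m cover] := aleph0_basis_cover eV_basis (atomsV E).
have [w [wL w0]] := Phi_sea.1 m (fun i => eV i) (fun=> 0) L (fun c => eV_basis.1 m c).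
exists w; split=> // v /In_mem vE.
have [c ->] : exists c : 'I_m -> F, v = \sum_(i < m) c i *: eV i.
  by apply: cover; rewrite mem_pmap (map_f _ vE).
by rewrite form_suml //; apply: big1 => i _; rewrite w0 mulr0.
Qed.

Lemma exists_dual_pair E : exists n, forall (z1 z2 : Vs) (r1 r2 : F),
  z1 \notin span_seq (fun i : 'I_n => eS i) ->
  z2 \notin span_seq (extend (fun i : 'I_n => eS i) z1) ->
  exists u, [/\ orthVs Phi E u, Phi u z1 = r1 & Phi u z2 = r2].
Proof.
have [n cover] := aleph0_basis_cover eS_basis (atomsVs E).
exists n => z1 z2 r1 r2 z1_notin z2_notin.
have indep : lin_indep_fin (extend (extend (fun i : 'I_n => eS i) z1) z2).
  by do 2![apply: lin_indep_extend_span => //]; move=> c; exact: eS_basis.1.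
have [u [_ u_val]] := Phi_sea.2 _ _ (extend (extend (fun=> 0) r1) r2) [::] indep.
exists u; split.
- move=> w /In_mem wE.
  have [c ->] : exists c : 'I_n -> F, w = \sum_(i < n) c i *: eS i.
    by apply: cover; rewrite mem_pmap (map_f _ wE).
  rewrite form_sumr //; apply: big1 => i _.
  by have := u_val (lift ord_max (lift ord_max i)); rewrite !extend_lift => ->; rewrite mulr0.
- by have := u_val (lift ord_max ord_max); rewrite !extend_lift !extend_max.
- by have := u_val ord_max; rewrite !extend_max.
Qed.

Variables (B : (V -> F) -> Prop) (A0 : list (atom V Vs)).
Hypothesis B_free : free_set B.
Hypothesis B_spans :
  forall w, exists r, {in r, forall p, B p.2} /\ comb r =1 Phi^~ w.
Hypothesis B_invariant : forall s t, is_aut Phi s t -> fixes s t A0 ->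
  forall b, B b -> B (b \o s).
Hypothesis B_supported : forall b, B b ->
  exists E, forall s t, is_aut Phi s t -> fixes s t E -> b \o s = b.

Lemma exists_reduced_functional w :
  exists r, [/\ reduced r, {in r, forall p, B p.2} & comb r =1 Phi^~ w].
Proof.
have [r [rB rw]] := B_spans w; have [s [s_red sB sr]] := exists_reduced rB.
by exists s; split=> // x; rewrite sr rw.
Qed.

Lemma functional_precomp s t z w r : is_aut Phi s t -> fixes s t A0 -> t z = w ->
  {in r, forall p, B p.2} -> comb r =1 Phi^~ w ->
  {in precomp s r, forall p, B p.2} /\ comb (precomp s r) =1 Phi^~ z.
Proof.
move=> st_aut st_A0 <- rB rz; split=> [_ /mapP[p pr ->]|x].
  exact: B_invariant st_aut st_A0 _ (rB p pr).
by rewrite comb_precomp rz; case: st_aut.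
Qed.

Lemma exists_common_support (bs : seq (V -> F)) : {in bs, forall b, B b} ->
  exists E, forall s t, is_aut Phi s t -> fixes s t E -> {in bs, forall b, b \o s = b}.
Proof.
elim: bs => [|b bs IH] bsB; first by exists [::].
have [Eb Eb_fix] := B_supported (bsB b (mem_head b bs)).
have [Ebs Ebs_fix] : exists Ebs, forall s t, is_aut Phi s t -> fixes s t Ebs ->
    {in bs, forall b, b \o s = b}.
  by apply: IH => b' b'bs; apply: bsB; rewrite inE b'bs orbT.
exists (Eb ++ Ebs) => s t st_aut st_E b'; rewrite inE => /predU1P[->|b'bs].
  by apply: (Eb_fix s t st_aut) => a aEb; apply/st_E/List.in_or_app; left.
by apply: (Ebs_fix s t st_aut) => // a aEbs; apply/st_E/List.in_or_app; right.
Qed.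

Lemma coef_generic_functional E : (forall a, List.In a A0 -> List.In a E) ->
  exists L : seq Vs, forall w r b, orthV Phi E w -> w \notin L ->
  {in r, forall p, B p.2} -> comb r =1 Phi^~ w ->
  (forall s t, is_aut Phi s t -> fixes s t E -> b \o s = b) -> coef r b = 0.
Proof.
move=> A0E; have [n dual] := exists_dual_pair E.
exists (span_seq (fun i : 'I_n => eS i)) => w r b wE wL rB rw b_inv.
have [d [dL dE]] := exists_orthogonal E (span_seq (extend (fun i : 'I_n => eS i) w)).
have [u3 [u3E u3w u3d]] := dual w d 1 1 wL dL.
have [u4 [u4E u4w u4d]] := dual w d 1 0 wL dL.
have fix_A0 s t : fixes s t E -> fixes s t A0 by move=> st_E a /A0E; exact: st_E.
have u3_dw : Phi u3 (d - w) = 0 by rewrite formBr // u3d u3w subrr.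
have dw_E : orthV Phi E (d - w) by move=> v vE; rewrite formBr // dE // wE // subrr.
have a3 := transvection_aut Phi_bilinear u3_dw; have f3 := transvection_fixes dw_E u3E.
have a4 := transvection_aut Phi_bilinear u4d; have f4 := transvection_fixes dE u4E.
have t3 : transvectionVs Phi (d - w) u3 d = w.
  by rewrite /transvectionVs u3d scale1r opprB addrC subrK.
have t4 : transvectionVs Phi d u4 (w + d) = w.
  by rewrite /transvectionVs formDr // u4w u4d addr0 scale1r addrK.
set s3 := transvectionV Phi (d - w) u3 in a3 f3.
set s4 := transvectionV Phi d u4 in a4 f4.
have [r3B r3d] := functional_precomp a3 (fix_A0 _ _ f3) t3 rB rw.
have [r4B r4wd] := functional_precomp a4 (fix_A0 _ _ f4) t4 rB rw.
have r4_cat : comb (precomp s4 r) =1 comb (r ++ precomp s3 r).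
  by move=> x; rewrite r4wd comb_cat rw r3d formDr.
have r_catB : {in r ++ precomp s3 r, forall p, B p.2}.
  by move=> p; rewrite mem_cat => /orP[/rB|/r3B].
have [s3_bij s4_bij] := (aut_bij a3, aut_bij a4).
have [b_s3 b_s4] := (b_inv _ _ a3 f3, b_inv _ _ a4 f4).
have := coef_unique B_free r4B r_catB r4_cat b.
by rewrite coef_cat !coef_precomp // -{1}[coef r b]addr0 => /addrI.
Qed.

Lemma no_invariant_basis : False.
Proof.
have [n0 dual0] := exists_dual_pair A0.
have [w [wL _]] := exists_orthogonal [::] (span_seq (fun i : 'I_n0 => eS i)).
have [r [r_red rB rw]] := exists_reduced_functional w.
have rB' : {in map snd r, forall b, B b} by move=> _ /mapP[p pr ->]; exact: rB.
have [E0 E0_fix] := exists_common_support rB'.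
pose E := A0 ++ E0.
have A0E a : List.In a A0 -> List.In a E by move=> aA0; apply: List.in_or_app; left.
have [L L_generic] := coef_generic_functional A0E.
have [w' [w'L w'E]] := exists_orthogonal E (span_seq (extend (fun i : 'I_n0 => eS i) w) ++ L).
move: w'L; rewrite mem_cat negb_or => /andP[w'_notin w'L].
have [r' [r'_red r'B r'w']] := exists_reduced_functional w'.
have disj : {in map snd r, forall b, b \notin map snd r'}.
  move=> b b_r; rewrite -reduced_coef // negbK; apply/eqP/(L_generic w' r' b) => // s t st_aut st_E.
  by apply: (E0_fix s t st_aut) => // a aE0; apply/st_E/List.in_or_app; right.
have [u2 [u2A0 u2w u2w']] := dual0 w w' 1 0 wL w'_notin.
have [u [_ _ uw']] := dual0 w w' 0 1 wL w'_notin.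
have a2 := transvection_aut Phi_bilinear u2w'.
have f2 := transvection_fixes (fun v vA0 => w'E v (A0E _ vA0)) u2A0.
have t2 : transvectionVs Phi w' u2 (w + w') = w.
  by rewrite /transvectionVs formDr // u2w u2w' addr0 scale1r addrK.
set s2 := transvectionV Phi w' u2 in a2 f2.
have [r2B r2ww'] := functional_precomp a2 f2 t2 rB rw.
have r_catB : {in r ++ r', forall p, B p.2} by move=> p; rewrite mem_cat => /orP[/rB|/r'B].
have r_cat : comb (precomp s2 r) =1 comb (r ++ r').
  by move=> x; rewrite r2ww' comb_cat rw r'w' formDr.
have := reduced_size_unique B_free (reduced_precomp (aut_bij a2) r_red)
  (reduced_cat r_red r'_red disj) r2B r_catB r_cat.
rewrite size_map size_cat -{1}[size r]addn0 => /addnI/esym/size0nil r'0.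
by move: (r'w' u); rewrite r'0 uw' /comb big_nil => /eqP; rewrite eq_sym oner_eq0.
Qed.

End NoInvariantBasis.

Section VectorAtoms.
Variables (F : finFieldType) (V Vs : lmodType F) (Phi : V -> Vs -> F).
Notation Z := (zfa (atom V Vs)).

Definition vector_atoms : Z := Cls (fun v : V => Atm (inl v)).

Definition restrict (f : Z -> F) : V -> F := fun v => f (Atm (inl v)).

Definition functional (w : Vs) : Z -> F :=
  fun y => if y is Atm (inl v) then Phi v w else 0.

Lemma zin_vector_atoms y : zin y vector_atoms -> exists v, y = Atm (inl v).
Proof. by case: y => [a|Ix f] [v] //= ->; exists v. Qed.

Lemma vector_atom_in v : zin (Atm (inl v)) vector_atoms.
Proof. by exists v. Qed.

Lemma vector_atoms_equivariant : equivariant Phi vector_atoms.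
Proof.
move=> s t [[g _ sg] _ _ _ _] _; split=> v; first by exists (s v).
by exists (g v); rewrite /= sg.
Qed.

Lemma functional_in_FX w : in_FX Phi vector_atoms (functional w).
Proof.
split; first by move=> y [a|Ix f] /zin_vector_atoms[v ->] //= <-.
exists [:: inr w] => s t [_ _ _ _ Phi_st] st_w y /zin_vector_atoms[v ->] /=.
have [tw] : inr (t w) = inr w :> atom V Vs := st_w (inr w) (or_introl erefl).
by rewrite -{1}tw Phi_st.
Qed.

Lemma is_aut_id : is_aut Phi id id.
Proof. by split; [exists id | exists id | split | split | ]. Qed.

Section Orbits.
Hypotheses (Phi_bilinear : bilinear_form Phi) (Phi_sea : space_extension_axiom Phi).

Lemma exists_aut_moving (e v : V) : e != 0 -> (forall c, v <> c *: e) ->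
  exists s t, is_aut Phi s t /\ s e = v.
Proof.
move=> e_neq0 v_notin.
have indep : lin_indep_fin (extend (extend (fun _ : 'I_0 => e) e) v).
  apply: lin_indep_extend; first apply: lin_indep_extend.
  - exact: lin_indep_fin0.
  - by move=> c; rewrite big_ord0; apply/eqP.
  move=> c v_eq; apply: (v_notin (c ord0)); rewrite v_eq big_ord1.
  by rewrite /extend; case: unliftP => [[]|].
have [x [_ x_val]] := Phi_sea.1 _ _ (extend (extend (fun _ : 'I_0 => 0) 1) 1) [::] indep.
have ex : Phi e x = 1 by have := x_val (lift ord_max ord_max); rewrite !extend_lift !extend_max.
have vx : Phi v x = 1 by have := x_val ord_max; rewrite !extend_max.
have vex : Phi (v - e) x = 0 by rewrite formBl // vx ex subrr.
exists (transvectionV Phi x (v - e)), (transvectionVs Phi x (v - e)).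
by split; [exact: transvection_aut | rewrite /transvectionV ex scale1r addrC subrK].
Qed.

Lemma vector_atoms_definable (eV : nat -> V) : aleph0_basis eV ->
  definable Phi vector_atoms.
Proof.
move=> eV_basis; split; first exact: vector_atoms_equivariant.
have e_neq0 : eV 0%N != 0.
  apply/eqP => e0; have := eV_basis.1 1%N (fun=> 1); rewrite big_ord1 scale1r.
  by move=> /(_ e0 ord0)/eqP; rewrite oner_eq0.
exists #|{: F}|, (fun k => Atm (inl (enum_val k *: eV 0%N))); split.
  by move=> k; exact: vector_atom_in.
move=> y /zin_vector_atoms[v ->].
have [[c ->]|v_notin] := pselect (exists c : F, v = c *: eV 0%N).
  by exists (enum_rank c), id, id; split; [exact: is_aut_id | rewrite /= enum_rankK].
have [s [t [st_aut s_e]]] := exists_aut_moving e_neq0 (fun c v_eq => v_notin (ex_intro _ c v_eq)).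
by exists (enum_rank 1), s, t; split; rewrite //= enum_rankK scale1r s_e.
Qed.

End Orbits.

Section RestrictedBasis.
Variable B : (Z -> F) -> Prop.
Hypothesis B_basis : is_basis_in_model Phi vector_atoms B.

Definition restricted_basis (b : V -> F) : Prop := exists2 f, B f & b = restrict f.

Lemma restricted_basis_free : free_set restricted_basis.
Proof.
move=> r rB r_uniq r0; pose p0 := (0 : F, fun _ : V => 0 : F).
have [fs fsP] : exists fs : 'I_(size r) -> Z -> F,
    forall i, B (fs i) /\ (nth p0 r i).2 = restrict (fs i).
  apply: (@fin_all_exists _ (fun=> Z -> F)
    (fun (i : 'I_(size r)) f => B f /\ (nth p0 r i).2 = restrict f)) => i.
  by have [f fB ->] := rB _ (mem_nth p0 (ltn_ord i)); exists f.
have [_ [_ [_ [B_indep _]]]] := B_basis.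
have c0 := B_indep (size r) fs (fun i => (nth p0 r i).1) (fun i => (fsP i).1).
move=> p pr; have ip : (index p r < size r)%N by rewrite index_mem.
rewrite -(nth_index p0 pr); apply: (c0 _ _ (Ordinal ip)).
- move=> i j /negP ij fs_ij; apply/ij/eqP/val_inj/(uniqP p0.2 r_uniq);
    rewrite ?inE ?size_map; try exact: ltn_ord.
  apply: etrans (nth_map p0 _ _ (ltn_ord i)) (etrans _ (esym (nth_map p0 _ _ (ltn_ord j)))).
  rewrite /= (fsP i).2 (fsP j).2.
  by apply/funext => v; apply: fs_ij; exact: vector_atom_in.
- move=> y /zin_vector_atoms[v ->]; rewrite -[RHS](r0 v) /comb (big_nth p0) big_mkord.
  by apply: eq_bigr => i _; rewrite (fsP i).2.
Qed.

Lemma restricted_basis_spans w :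
  exists r, {in r, forall p, restricted_basis p.2} /\ comb r =1 Phi^~ w.
Proof.
have [_ [_ [_ [_ B_span]]]] := B_basis.
have [n [fs [c [fsB w_eq]]]] := B_span _ (functional_in_FX w).
exists [seq (c i, restrict (fs i)) | i <- enum 'I_n]; split.
  by move=> _ /mapP[i _ ->]; exists (fs i).
move=> v; rewrite /comb big_map big_enum /=; symmetry; exact: w_eq _ (vector_atom_in v).
Qed.

Lemma restricted_basis_invariant : exists A0, forall s t, is_aut Phi s t ->
  fixes s t A0 -> forall b, restricted_basis b -> restricted_basis (b \o s).
Proof.
have [_ [_ [[A0 A0_supp] _]]] := B_basis.
exists A0 => s t st_aut st_A0 _ [g gB ->].
have [_ /(_ g gB)[f [fB gf]]] := A0_supp s t st_aut st_A0.
by exists f => //; apply/funext => v; exact: gf _ (vector_atom_in v).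
Qed.

Lemma restricted_basis_supported b : restricted_basis b ->
  exists E, forall s t, is_aut Phi s t -> fixes s t E -> b \o s = b.
Proof.
case=> f /(B_basis.1) [_ [E f_supp]] ->.
exists E => s t st_aut st_E; apply/funext => v.
exact: f_supp s t st_aut st_E _ (vector_atom_in v).
Qed.

End RestrictedBasis.
End VectorAtoms.

Theorem mainTheorem14 :
  forall (p : nat), prime p ->
  forall (V Vs : lmodType 'F_p) (Phi : V -> Vs -> 'F_p),
    aleph0_dim V -> aleph0_dim Vs ->
    bilinear_form Phi -> space_extension_axiom Phi ->
    exists X : zfa (atom V Vs),
      [/\ is_set X, in_model Phi X, definable Phi X & ~ FX_has_basis Phi X].
Proof.
(* 'F_p is a finite field for every p. *)
move=> p _ V Vs Phi [eV eV_basis] [eS eS_basis] Phi_bilinear Phi_sea.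
exists (vector_atoms V Vs); split=> //.
- by split=> //; exists [::]; exact: vector_atoms_equivariant.
- exact: vector_atoms_definable eV_basis.
case=> B B_basis; have [A0 B_invariant] := restricted_basis_invariant B_basis.
exact: (no_invariant_basis Phi_bilinear Phi_sea eV_basis eS_basis
  (restricted_basis_free B_basis) (restricted_basis_spans B_basis)
  B_invariant (restricted_basis_supported B_basis)).
Qed.
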